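(* (i) Let $I,J$ be sets and $R\colon I\times J\to[0,1]$ a fuzzy relation. Then the mappings $d_R\colon[0,1]^I\to[0,1]^J$ and $h_R\colon[0,1]^J\to[0,1]^I$ satisfy $d_R\rightleftharpoons h_R$. (ii) Let $\mathbf A$ and $\mathbf B$ be semisimple Pavelka algebras and let $d\colon A\to B$, $h\colon B\to A$ satisfy $d\rightleftharpoons h$. Then there exists a fuzzy relation $R\colon\mathrm{Spec_M}\mathbf A\times\mathrm{Spec_M}\mathbf B\to[0,1]$ (namely $R(F,G)=\bigvee_{a\in A}(d(a)/G\cdot a/F)$) such that $n_{\mathbf B}(d(x))=d_R(n_{\mathbf A}(x))$ for all $x\in A$ and $n_{\mathbf A}(h(y))=h_R(n_{\mathbf B}(y))$ for all $y\in B$, with $I=\mathrm{Spec_M}\mathbf A$, $J=\mathrm{Spec_M}\mathbf B$.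
   Context: An MV-algebra $(A;\oplus,\neg,0)$ carries derived operations $1=\neg0$, $x\cdot y=\neg(\neg x\oplus\neg y)$, $x\rightarrow y=\neg x\oplus y$, lattice operations $x\vee y=\neg(\neg x\oplus y)\oplus y$, $x\wedge y=\neg(\neg x\vee\neg y)$, order $x\le y$ iff $\neg x\oplus y=1$. The standard MV-algebra is $[0,1]$ with $x\oplus y=\min\{x+y,1\}$, $\neg x=1-x$. A Pavelka algebra is $\mathbf A=(A;\oplus,\neg,\{\mathbf r\mid r\in[0,1]\cap\mathbb Q\})$ with $(A;\oplus,\neg,\mathbf 0)$ an MV-algebra, $\mathbf r\oplus\mathbf s=\mathbf t$ whenever $\min\{r+s,1\}=t$, and $\neg\mathbf r=\mathbf s$ whenever $1-r=s$. The standard Pavelka algebra is $[0,1]$ with $\mathbf r$ interpreted as $r$; $[0,1]^I$ is its power. Filters are filters of the MV-reduct (nonempty up-sets closed under $\cdot$); $\mathrm{Spec_M}\mathbf A$ is the set of maximal proper filters; for $F\in\mathrm{Spec_M}\mathbf A$, $\mathbf A/F$ embeds uniquely into $[0,1]$ and $x/F$ is identified with its image. $\mathbf A$ is semisimple if its MV-reduct is a subdirect product of simple MV-algebras. Natural embedding: $n_{\mathbf A}(x)(F)=x/F$. For $d\colon A\to B$, $h\colon B\to A$: $d\rightleftharpoons h$ means $d,h$ are antitone, $x\le d(y)$ iff $y\le h(x)$ for all $y\in A$, $x\in B$, and $\mathbf r\rightarrow d(x)=d(\mathbf r\cdot x)$ for all $x\in A$ and constants $\mathbf r$ (equivalently $\mathbf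 r\rightarrow h(y)=h(\mathbf r\cdot y)$ for all $y\in B$). For $R\colon I\times J\to[0,1]$: $d_R(x)(j)=\bigwedge_{i\in I}(x(i)\rightarrow R(i,j))$ for $x\in[0,1]^I$; $h_R(y)(i)=\bigwedge_{j\in J}(y(j)\rightarrow R(i,j))$ for $y\in[0,1]^J$. *)

From Stdlib Require Import Reals Lra QArith Qreals ClassicalEpsilon.
Open Scope R_scope.

Definition I01 : Type := {r : R | 0 <= r <= 1}.
Definition v01 (x : I01) : R := proj1_sig x.

Definition Q01 : Type := {q : Q | 0 <= Q2R q <= 1}.
Definition qv (q : Q01) : R := Q2R (proj1_sig q).

Record MVSig := {
  mcar :> Type;
  moplus : mcar -> mcar -> mcar;
  mneg : mcar -> mcar;
  mzero : mcar }.
Arguments moplus {m} _ _.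
Arguments mneg {m} _.
Arguments mzero {m}.

Record PSig := {
  psig_mv :> MVSig;
  pcst : Q01 -> psig_mv }.
Arguments pcst {p} _.

Section Derived.
Variable M : MVSig.
Definition mone : M := mneg mzero.
Definition mmul (x y : M) : M := mneg (moplus (mneg x) (mneg y)).
Definition marrow (x y : M) : M := moplus (mneg x) y.
Definition mjoin (x y : M) : M := moplus (mneg (moplus (mneg x) y)) y.
Definition mmeet (x y : M) : M := mneg (mjoin (mneg x) (mneg y)).
Definition mle (x y : M) : Prop := moplus (mneg x) y = mone.

Definition is_MV : Prop :=
  (forall x y z : M, moplus x (moplus y z) = moplus (moplus x y) z) /\
  (forall x y : M, moplus x y = moplus y x) /\
  (forall x : M, moplus x mzero = x) /\
  (forall x : M, mneg (mneg x) = x) /\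
  (forall x : M, moplus x (mneg mzero) = mneg mzero) /\
  (forall x y : M, moplus (mneg (moplus (mneg x) y)) y
                   = moplus (mneg (moplus (mneg y) x)) x).

Definition is_filter (F : M -> Prop) : Prop :=
  (exists x, F x) /\
  (forall x y, F x -> mle x y -> F y) /\
  (forall x y, F x -> F y -> F (mmul x y)).
Definition is_proper_filter (F : M -> Prop) : Prop :=
  is_filter F /\ exists x, ~ F x.
Definition is_maximal_filter (F : M -> Prop) : Prop :=
  is_proper_filter F /\
  forall G, is_proper_filter G -> (forall x, F x -> G x) -> forall x, G x -> F x.

Definition is_simple : Prop :=
  is_MV /\ mzero <> mone /\
  forall F, is_filter F -> (forall x, F x <-> x = mone) \/ (forall x, F x).
End Derived.
Arguments mone {M}. Arguments mmul {M} _ _. Arguments marrow {M} _ _.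
Arguments mjoin {M} _ _. Arguments mmeet {M} _ _. Arguments mle {M} _ _.

Definition is_MVhom (M N : MVSig) (f : M -> N) : Prop :=
  (forall x y, f (moplus x y) = moplus (f x) (f y)) /\
  (forall x, f (mneg x) = mneg (f x)) /\
  f mzero = mzero.

Definition is_Pavelka (A : PSig) : Prop :=
  is_MV A /\
  (forall r : Q01, qv r = 0 -> (mzero : A) = pcst r) /\
  (forall r s t : Q01, Rmin (qv r + qv s) 1 = qv t ->
      moplus (pcst r : A) (pcst s) = pcst t) /\
  (forall r s : Q01, 1 - qv r = qv s -> mneg (pcst r : A) = pcst s).

Definition is_Phom (A B : PSig) (f : A -> B) : Prop :=
  is_MVhom A B f /\ forall r : Q01, f (pcst r) = pcst r.

(** Semisimple: the MV-reduct is a subdirect product of simple MV-algebras *)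
Definition semisimple (A : PSig) : Prop :=
  exists (K : Type) (S : K -> MVSig) (e : A -> forall k, S k),
    (forall k, is_simple (S k)) /\
    (forall k, is_MVhom A (S k) (fun x => e x k)) /\
    (forall x y, (forall k, e x k = e y k) -> x = y) /\
    (forall k (s : S k), exists x, e x k = s).

Lemma i01_oplus_ok (x y : I01) : 0 <= Rmin (v01 x + v01 y) 1 <= 1.
Proof. destruct x as [a Ha], y as [b Hb]; unfold v01, Rmin; simpl;
  destruct Rle_dec; lra. Qed.
Lemma i01_neg_ok (x : I01) : 0 <= 1 - v01 x <= 1.
Proof. destruct x as [a Ha]; unfold v01; simpl; lra. Qed.
Lemma i01_zero_ok : 0 <= 0 <= 1.
Proof. lra. Qed.

Definition i01_oplus (x y : I01) : I01 := exist _ _ (i01_oplus_ok x y).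
Definition i01_neg (x : I01) : I01 := exist _ _ (i01_neg_ok x).
Definition i01_zero : I01 := exist _ _ i01_zero_ok.
Definition i01_cst (q : Q01) : I01 := exist _ (qv q) (proj2_sig q).

Definition std01_mv : MVSig := Build_MVSig I01 i01_oplus i01_neg i01_zero.
Definition std01 : PSig := Build_PSig std01_mv i01_cst.

Definition pow01_mv (K : Type) : MVSig :=
  Build_MVSig (K -> I01) (fun x y k => i01_oplus (x k) (y k))
              (fun x k => i01_neg (x k)) (fun _ => i01_zero).
Definition pow01 (K : Type) : PSig := Build_PSig (pow01_mv K) (fun q _ => i01_cst q).

Section SupInf.
Variable K : Type.
Variable f : K -> I01.
Definition sup_set (r : R) : Prop := r = 0 \/ exists k, r = v01 (f k).
Lemma sup_set_bound : bound sup_set.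
Proof. exists 1. intros r [->|[k ->]]; [lra|]. destruct (f k) as [a Ha]; simpl; lra. Qed.
Lemma sup_set_ne : exists r, sup_set r.
Proof. exists 0; left; reflexivity. Qed.
Definition sup_val : R := proj1_sig (completeness sup_set sup_set_bound sup_set_ne).
Lemma sup_val_ok : 0 <= sup_val <= 1.
Proof.
  unfold sup_val; destruct (completeness _ _ _) as [m [Hub Hl]]; simpl; split.
  - apply Hub; left; reflexivity.
  - apply Hl; intros r [->|[k ->]]; [lra|]. destruct (f k) as [a Ha]; simpl; lra.
Qed.
(** the supremum in [0,1] (empty sup = 0) *)
Definition sup01 : I01 := exist _ sup_val sup_val_ok.
End SupInf.
Arguments sup01 {K} f.
(** the infimum in [0,1] (empty inf = 1) *)
Definition inf01 {K : Type} (f : K -> I01) : I01 :=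
  i01_neg (sup01 (fun k => i01_neg (f k))).

Definition dR {I J : Type} (Rel : I -> J -> I01) (x : I -> I01) : J -> I01 :=
  fun j => inf01 (fun i => @marrow std01 (x i) (Rel i j)).
Definition hR {I J : Type} (Rel : I -> J -> I01) (y : J -> I01) : I -> I01 :=
  fun i => inf01 (fun j => @marrow std01 (y j) (Rel i j)).

Definition galois (A B : PSig) (d : A -> B) (h : B -> A) : Prop :=
  (forall x y : A, mle x y -> mle (d y) (d x)) /\
  (forall x y : B, mle x y -> mle (h y) (h x)) /\
  (forall (y : A) (x : B), mle x (d y) <-> mle y (h x)) /\
  (forall (r : Q01) (x : A), marrow (pcst r : B) (d x) = d (mmul (pcst r : A) x)).

Definition SpecM (A : PSig) : Type := {F : A -> Prop | is_maximal_filter A F}.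

(** x/F : the image of x under the (unique) embedding of A/F into [0,1],
    i.e. the homomorphism φ : A → [0,1] with φ^{-1}(1) = F. *)
Definition quot_hom (A : PSig) (F : SpecM A) : A -> I01 :=
  epsilon (inhabits (fun _ : A => i01_zero))
    (fun phi : A -> I01 => is_Phom A std01 phi /\
       forall a : A, proj1_sig F a <-> phi a = @mone std01).
Definition quot (A : PSig) (x : A) (F : SpecM A) : I01 := quot_hom A F x.

Definition nat_emb (A : PSig) (x : A) : SpecM A -> I01 := fun F => quot A x F.

Definition Rel_of (A B : PSig) (d : A -> B) : SpecM A -> SpecM B -> I01 :=
  fun F G => sup01 (fun a : A => @mmul std01 (quot B (d a) G) (quot A a F)).

(* (i) is a computation in [0,1]: both [x ≤ d_R y] and [y ≤ h_R x] say [y i ⊙ x j ≤ R i j]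
   for all [i], [j], and [r → _] commutes with infima.

   (ii) Measuring each element of a simple factor by the rational constants below it (Hölder)
   embeds a semisimple Pavelka algebra into a power of [0,1].  In this representation every
   maximal filter [F] is prime, so [A/F] is totally ordered and the same measurement yields the
   homomorphism [x ↦ x/F].  The inequality [d(x)/G ≤ d_R(n_A x)(G)] is immediate from the
   definition of [R].  Conversely, if [d(x)/G < s < d_R(n_A x)(G)] with [s] rational, the filter
   generated by the [(b → s·x)·(¬s → x)] with [d b ∈ G] is proper, and a maximal filter [F] above
   it gives [R(F,G) ≤ (s·x)/F = s + x/F - 1], i.e. [x/F → R(F,G) ≤ s], a contradiction.
   The statement for [h] follows by symmetry, as [h ⇌ d] and [R_h(G,F) = R_d(F,G)]. *)

From mathcomp Require classical_sets.
From Stdlib Require Import Reals QArith Qreals ZArith Lra Lia Classical ClassicalEpsilon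
  ProofIrrelevance FunctionalExtensionality PropExtensionality.
Open Scope R_scope.

Ltac minmax := unfold Rmin, Rmax in *; repeat destruct Rle_dec; lra.

Lemma I01_eq (a b : I01) : v01 a = v01 b -> a = b.
Proof.
  destruct a as [a Ha], b as [b Hb]; unfold v01; simpl; intros ->.
  f_equal; apply proof_irrelevance.
Qed.

Lemma v01_bounds (a : I01) : 0 <= v01 a <= 1.
Proof. exact (proj2_sig a). Qed.

Lemma qv_bounds (q : Q01) : 0 <= qv q <= 1.
Proof. exact (proj2_sig q). Qed.

Lemma v01_neg (a : I01) : v01 (i01_neg a) = 1 - v01 a.
Proof. reflexivity. Qed.

Lemma v01_oplus (a b : I01) : v01 (i01_oplus a b) = Rmin (v01 a + v01 b) 1.
Proof. reflexivity. Qed.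

Lemma v01_cst (q : Q01) : v01 (i01_cst q) = qv q.
Proof. reflexivity. Qed.

Lemma v01_arrow (a b : I01) : v01 (@marrow std01 a b) = Rmin 1 (1 - v01 a + v01 b).
Proof.
  unfold marrow; simpl. pose proof (v01_bounds a); pose proof (v01_bounds b).
  unfold v01 in *; simpl. minmax.
Qed.

Lemma v01_mul (a b : I01) : v01 (@mmul std01 a b) = Rmax 0 (v01 a + v01 b - 1).
Proof.
  unfold mmul; simpl. pose proof (v01_bounds a); pose proof (v01_bounds b).
  unfold v01 in *; simpl. minmax.
Qed.

Lemma std01_mle (a b : I01) : @mle std01 a b <-> v01 a <= v01 b.
Proof.
  unfold mle. pose proof (v01_bounds a) as Ha; pose proof (v01_bounds b) as Hb. split.
  - intros E. apply (f_equal v01) in E. change (v01 (@marrow std01 a b) = 1 - 0) in E.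
    rewrite v01_arrow in E. minmax.
  - intros Hab. apply I01_eq. change (v01 (@marrow std01 a b) = 1 - 0).
    rewrite v01_arrow. minmax.
Qed.

Lemma pow01_mle (K : Type) (x y : pow01 K) :
  mle x y <-> forall k, v01 (x k) <= v01 (y k).
Proof.
  split.
  - intros E k. apply std01_mle. exact (f_equal (fun z => z k) E).
  - intros Hxy. apply functional_extensionality; intros k. exact (proj2 (std01_mle _ _) (Hxy k)).
Qed.

Section SupInf.
Context {K : Type}.

Lemma sup01_ub (f : K -> I01) k : v01 (f k) <= v01 (sup01 f).
Proof.
  unfold sup01, sup_val; simpl. destruct (completeness _ _ _) as [m [Hub Hl]]; simpl.
  apply Hub; right; exists k; reflexivity.
Qed.

Lemma sup01_lub (f : K -> I01) b :
  0 <= b -> (forall k, v01 (f k) <= b) -> v01 (sup01 f) <= b.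
Proof.
  intros H0 H. unfold sup01, sup_val; simpl. destruct (completeness _ _ _) as [m [Hub Hl]]; simpl.
  apply Hl. intros r [->|[k ->]]; auto.
Qed.

Lemma inf01_lb (f : K -> I01) k : v01 (inf01 f) <= v01 (f k).
Proof.
  unfold inf01. rewrite v01_neg.
  pose proof (sup01_ub (fun k => i01_neg (f k)) k) as H. cbv beta in H. rewrite v01_neg in H. lra.
Qed.

Lemma inf01_glb (f : K -> I01) b :
  b <= 1 -> (forall k, b <= v01 (f k)) -> b <= v01 (inf01 f).
Proof.
  intros H1 H. unfold inf01. rewrite v01_neg.
  enough (v01 (sup01 (fun k => i01_neg (f k))) <= 1 - b) by lra.
  apply sup01_lub; [lra|]. intros k; rewrite v01_neg; specialize (H k); lra.
Qed.

Lemma inf01_arrow (r : I01) (f : K -> I01) :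
  inf01 (fun k => @marrow std01 r (f k)) = @marrow std01 r (inf01 f).
Proof.
  apply I01_eq. rewrite v01_arrow. pose proof (v01_bounds r).
  pose proof (v01_bounds (inf01 f)). pose proof (v01_bounds (inf01 (fun k => @marrow std01 r (f k)))).
  apply Rle_antisym.
  - apply Rnot_lt_le; intros Hlt.
    assert (v01 (inf01 (fun k => @marrow std01 r (f k))) - 1 + v01 r <= v01 (inf01 f)); [|minmax].
    apply inf01_glb; [lra|]. intros k.
    pose proof (inf01_lb (fun k => @marrow std01 r (f k)) k) as Hk. cbv beta in Hk.
    rewrite v01_arrow in Hk. pose proof (v01_bounds (f k)). minmax.
  - apply inf01_glb; [minmax|]. intros k. rewrite v01_arrow.
    pose proof (inf01_lb f k). minmax.
Qed.

End SupInf.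

Lemma exists_Q_between (a b : R) : a < b -> exists q : Q, a < Q2R q < b.
Proof.
  intros Hab. destruct (archimed_cor1 (b - a)) as [N [HN HN0]]; [lra|].
  assert (HNp : 0 < INR N) by (apply lt_0_INR; lia).
  destruct (archimed (a * INR N)) as [H1 H2].
  exists (Qmake (up (a * INR N)) (Pos.of_nat N)). unfold Q2R; simpl.
  assert (E : IZR (Z.pos (Pos.of_nat N)) = INR N).
  { rewrite <- positive_nat_Z, <- INR_IZR_INZ, Nat2Pos.id; auto; lia. }
  rewrite E. set (z := IZR (up (a * INR N))) in *.
  split.
  - apply (Rmult_lt_reg_r (INR N)); auto. field_simplify; lra.
  - apply (Rmult_lt_reg_r (INR N)); auto. field_simplify; [|lra].
    assert (/ INR N * INR N < (b - a) * INR N) by (apply Rmult_lt_compat_r; lra).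
    rewrite Rinv_l in H; lra.
Qed.

Definition mkQ01 (q : Q) (H : 0 <= Q2R q <= 1) : Q01 := exist _ q H.

Lemma exists_Q01_between (a b : R) : a < b -> a < 1 -> 0 < b -> exists q : Q01, a < qv q < b.
Proof.
  intros H1 H2 H3. destruct (exists_Q_between (Rmax a 0) (Rmin b 1)) as [q Hq]; [minmax|].
  assert (Hq' : 0 <= Q2R q <= 1) by minmax.
  exists (mkQ01 q Hq'). unfold qv; simpl. minmax.
Qed.

Lemma q0_bounds : 0 <= Q2R 0 <= 1. Proof. unfold Q2R; simpl; lra. Qed.
Definition q0 : Q01 := mkQ01 0 q0_bounds.
Lemma qv_q0 : qv q0 = 0. Proof. unfold qv, Q2R; simpl; lra. Qed.

Lemma q1_bounds : 0 <= Q2R 1 <= 1. Proof. unfold Q2R; simpl; lra. Qed.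
Definition q1 : Q01 := mkQ01 1 q1_bounds.
Lemma qv_q1 : qv q1 = 1. Proof. unfold qv, Q2R; simpl; lra. Qed.

Lemma qcompl_bounds (q : Q01) : 0 <= Q2R (1 - proj1_sig q) <= 1.
Proof. rewrite Q2R_minus, RMicromega.Q2R_1. pose proof (qv_bounds q). unfold qv in H. lra. Qed.
Definition qcompl (q : Q01) : Q01 := mkQ01 _ (qcompl_bounds q).
Lemma qv_qcompl q : qv (qcompl q) = 1 - qv q.
Proof. unfold qcompl, qv; simpl. rewrite Q2R_minus, RMicromega.Q2R_1; reflexivity. Qed.

Lemma qadd_bounds (q p : Q01) : qv q + qv p <= 1 -> 0 <= Q2R (proj1_sig q + proj1_sig p) <= 1.
Proof. rewrite Q2R_plus. pose proof (qv_bounds q); pose proof (qv_bounds p). unfold qv in *. lra. Qed.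
Definition qadd (q p : Q01) (H : qv q + qv p <= 1) : Q01 := mkQ01 _ (qadd_bounds q p H).
Lemma qv_qadd q p H : qv (qadd q p H) = qv q + qv p.
Proof. unfold qadd, qv; simpl. rewrite Q2R_plus; reflexivity. Qed.

Lemma exists_Q01_below (a e : R) : 0 <= a <= 1 -> 0 < e ->
  exists q : Q01, a - e < qv q <= a /\ (qv q < a \/ qv q = 0).
Proof.
  intros Ha He. destruct (Req_dec a 0) as [->|Ha0].
  - exists q0. rewrite qv_q0. lra.
  - destruct (exists_Q01_between (a - e) a) as [q Hq]; try lra. exists q; lra.
Qed.

Lemma exists_Q01_trunc_add (q p : Q01) : exists t : Q01, qv t = Rmin (qv q + qv p) 1.
Proof.
  destruct (Rle_dec (qv q + qv p) 1) as [H|H].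
  - exists (qadd q p H). rewrite qv_qadd. minmax.
  - exists q1. rewrite qv_q1. minmax.
Qed.

Section MVTheory.
Variable M : MVSig.
Hypothesis HM : is_MV M.
Local Notation "x ⊕ y" := (@moplus M x y) (at level 50, left associativity).
Local Notation "¬ x" := (@mneg M x) (at level 35, right associativity).
Local Notation "0" := (@mzero M).
Local Notation "1" := (@mone M).
Local Notation "x ⊙ y" := (@mmul M x y) (at level 40, left associativity).
Local Notation "x ≤ y" := (@mle M x y) (at level 70).

Lemma oplusA (x y z : M) : x ⊕ (y ⊕ z) = x ⊕ y ⊕ z. Proof. apply HM. Qed.
Lemma oplusC (x y : M) : x ⊕ y = y ⊕ x. Proof. apply HM. Qed.
Lemma oplus0 (x : M) : x ⊕ 0 = x. Proof. apply HM. Qed.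
Lemma negK (x : M) : ¬ ¬ x = x. Proof. apply HM. Qed.
Lemma oplus1 (x : M) : x ⊕ 1 = 1. Proof. apply HM. Qed.
Lemma mjoin_sym (x y : M) : ¬ (¬ x ⊕ y) ⊕ y = ¬ (¬ y ⊕ x) ⊕ x. Proof. apply HM. Qed.

Lemma neg_inj (x y : M) : ¬ x = ¬ y -> x = y.
Proof. intros H. rewrite <- (negK x), <- (negK y), H; reflexivity. Qed.
Lemma neg1 : ¬ 1 = 0. Proof. apply negK. Qed.
Lemma oplus0l (x : M) : 0 ⊕ x = x. Proof. rewrite oplusC; apply oplus0. Qed.
Lemma oplus1l (x : M) : 1 ⊕ x = 1. Proof. rewrite oplusC; apply oplus1. Qed.
Lemma oplus_negl (x : M) : ¬ x ⊕ x = 1.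
Proof. pose proof (mjoin_sym x 1) as H. rewrite oplus1, neg1, oplus0l in H. symmetry; exact H. Qed.

Lemma mle_refl (x : M) : x ≤ x. Proof. apply oplus_negl. Qed.
Lemma mle_antisym (x y : M) : x ≤ y -> y ≤ x -> x = y.
Proof. unfold mle; intros H1 H2. pose proof (mjoin_sym x y) as H. rewrite H1, H2, neg1, !oplus0l in H. auto. Qed.
Lemma neg_mmul (x y : M) : ¬ (x ⊙ y) = ¬ x ⊕ ¬ y. Proof. apply negK. Qed.
Lemma neg_oplus (x y : M) : ¬ (x ⊕ y) = ¬ x ⊙ ¬ y.
Proof. unfold mmul; rewrite !negK; reflexivity. Qed.

Lemma mle_decomp (x y : M) : x ≤ y -> y = x ⊕ (y ⊙ ¬ x).
Proof. unfold mle, mmul; intros H. rewrite negK, oplusC, mjoin_sym, H, neg1, oplus0l; reflexivity. Qed.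
Lemma mle_oplusr (x z : M) : x ≤ x ⊕ z.
Proof. unfold mle. rewrite oplusA, oplus_negl, oplus1l; reflexivity. Qed.
Lemma mle_oplusl (x z : M) : x ≤ z ⊕ x.
Proof. rewrite oplusC; apply mle_oplusr. Qed.
Lemma mle_trans (x y z : M) : x ≤ y -> y ≤ z -> x ≤ z.
Proof.
  intros H1 H2. apply mle_decomp in H1. apply mle_decomp in H2.
  rewrite H2, H1, <- oplusA. apply mle_oplusr.
Qed.
Lemma oplus_monol (x y w : M) : x ≤ y -> x ⊕ w ≤ y ⊕ w.
Proof.
  intros H. apply mle_decomp in H. rewrite H. set (z := y ⊙ ¬ x).
  rewrite <- oplusA, (oplusC z w), oplusA. apply mle_oplusr.
Qed.
Lemma oplus_mono (x y x' y' : M) : x ≤ x' -> y ≤ y' -> x ⊕ y ≤ x' ⊕ y'.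
Proof.
  intros H1 H2. apply mle_trans with (x' ⊕ y); [apply oplus_monol; auto|].
  rewrite (oplusC x'), (oplusC x'). apply oplus_monol; auto.
Qed.
Lemma neg_anti (x y : M) : x ≤ y -> ¬ y ≤ ¬ x.
Proof. unfold mle; intros H. rewrite negK, oplusC; auto. Qed.
Lemma mle0x (x : M) : 0 ≤ x. Proof. apply oplus1l. Qed.
Lemma mlex1 (x : M) : x ≤ 1. Proof. apply oplus1. Qed.
Lemma mleE (x y : M) : x ≤ y <-> x ⊙ ¬ y = 0.
Proof.
  unfold mle, mmul. rewrite negK. split; intros H.
  - rewrite H; apply neg1.
  - apply neg_inj. rewrite H, neg1; reflexivity.
Qed.
Lemma mmulC (x y : M) : x ⊙ y = y ⊙ x. Proof. unfold mmul; rewrite oplusC; reflexivity. Qed.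
Lemma mmulA (x y z : M) : x ⊙ (y ⊙ z) = x ⊙ y ⊙ z.
Proof. unfold mmul; rewrite !negK, oplusA; reflexivity. Qed.
Lemma mmul1 (x : M) : x ⊙ 1 = x. Proof. unfold mmul; rewrite neg1, oplus0, negK; reflexivity. Qed.
Lemma mmul_neg (x : M) : x ⊙ ¬ x = 0.
Proof. unfold mmul; rewrite negK, oplus_negl, neg1; reflexivity. Qed.
Lemma mmul_residual (x y z : M) : x ⊙ y ≤ z <-> x ≤ ¬ y ⊕ z.
Proof. unfold mle. rewrite neg_mmul, oplusA. tauto. Qed.
Lemma mmul_monol (x y w : M) : x ≤ y -> x ⊙ w ≤ y ⊙ w.
Proof. intros H. apply neg_anti, oplus_monol, neg_anti, H. Qed.
Lemma mmul_mono (x y x' y' : M) : x ≤ x' -> y ≤ y' -> x ⊙ y ≤ x' ⊙ y'.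
Proof.
  intros H1 H2. apply mle_trans with (x' ⊙ y); [apply mmul_monol; auto|].
  rewrite (mmulC x'), (mmulC x'). apply mmul_monol; auto.
Qed.
Lemma mmul_le (x y : M) : x ⊙ y ≤ x.
Proof. apply mmul_residual, mle_oplusl. Qed.
Lemma mle0 (x : M) : x ≤ 0 -> x = 0.
Proof. intros H; apply mle_antisym; auto; apply mle0x. Qed.
Lemma mle1 (x : M) : 1 ≤ x -> x = 1.
Proof. intros H; apply mle_antisym; auto; apply mlex1. Qed.

Lemma mjoinE (x y : M) : mjoin x y = x ⊙ ¬ y ⊕ y.
Proof. unfold mjoin, mmul. rewrite negK; reflexivity. Qed.
Lemma mjoinC (x y : M) : mjoin x y = mjoin y x.
Proof. apply mjoin_sym. Qed.
Lemma mjoin_ubr (x y : M) : y ≤ mjoin x y.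
Proof. rewrite mjoinE; apply mle_oplusl. Qed.
Lemma mjoin_ubl (x y : M) : x ≤ mjoin x y.
Proof. rewrite mjoinC; apply mjoin_ubr. Qed.
Lemma mjoin_lub (x y z : M) : x ≤ z -> y ≤ z -> mjoin x y ≤ z.
Proof.
  intros H1 H2. rewrite mjoinE.
  apply mle_trans with (z ⊙ ¬ y ⊕ y); [apply oplus_monol, mmul_monol; auto|].
  rewrite <- mjoinE, mjoinC, mjoinE. apply mleE in H2. rewrite H2, oplus0l. apply mle_refl.
Qed.
Lemma neg_mmeet (x y : M) : ¬ mmeet x y = mjoin (¬ x) (¬ y).
Proof. apply negK. Qed.
Lemma mmeetC (x y : M) : mmeet x y = mmeet y x.
Proof. unfold mmeet; rewrite mjoinC; reflexivity. Qed.
Lemma mmeet_lbl (x y : M) : mmeet x y ≤ x.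
Proof. unfold mmeet. rewrite <- (negK x) at 2. apply neg_anti, mjoin_ubl. Qed.
Lemma mmeet_lbr (x y : M) : mmeet x y ≤ y.
Proof. rewrite mmeetC; apply mmeet_lbl. Qed.
Lemma mmeet_glb (x y z : M) : z ≤ x -> z ≤ y -> z ≤ mmeet x y.
Proof. intros H1 H2. unfold mmeet. rewrite <- (negK z). apply neg_anti, mjoin_lub; apply neg_anti; auto. Qed.

Lemma mmul_mjoin_le (c u v : M) : c ⊙ mjoin u v ≤ mjoin (c ⊙ u) (c ⊙ v).
Proof.
  rewrite mmulC. apply mmul_residual. apply mjoin_lub; apply mmul_residual; rewrite mmulC.
  - apply mjoin_ubl.
  - apply mjoin_ubr.
Qed.
Lemma mmeet_oplus_le (p s t : M) : mmeet (p ⊕ s) (p ⊕ t) ≤ p ⊕ mmeet s t.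
Proof.
  rewrite <- (negK (p ⊕ mmeet s t)). unfold mmeet at 1. apply neg_anti.
  rewrite neg_oplus, neg_mmeet, !neg_oplus. apply mmul_mjoin_le.
Qed.

(* Below [c], the maps [v ↦ ¬c ⊕ v] and [x ↦ c ⊙ x] are inverse order isomorphisms
   between [[0, c]] and [[¬c, 1]]; hence [c ⊙ _] preserves meets there. *)
Lemma mmul_oplus_neg (c v : M) : v ≤ c -> c ⊙ (¬ c ⊕ v) = v.
Proof.
  unfold mle, mmul; intros H.
  assert (E : ¬ (¬ c ⊕ v) ⊕ ¬ c = ¬ v).
  { rewrite (oplusC (¬ c) v). rewrite <- (negK v) at 1.
    rewrite mjoin_sym, negK, (oplusC c), H, neg1, oplus0l; reflexivity. }
  rewrite oplusC, E, negK; reflexivity.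
Qed.
Lemma oplus_neg_mmul (c x : M) : ¬ c ≤ x -> ¬ c ⊕ c ⊙ x = x.
Proof.
  unfold mle, mmul; intros H. rewrite negK in H. rewrite oplusC, (oplusC (¬ c) (¬ x)).
  rewrite mjoin_sym, negK, H, neg1, oplus0l; reflexivity.
Qed.
Lemma mmul_mmeet_ge (c x y : M) :
  ¬ c ≤ x -> ¬ c ≤ y -> mmeet (c ⊙ x) (c ⊙ y) ≤ c ⊙ mmeet x y.
Proof.
  intros Hx Hy. set (v := mmeet (c ⊙ x) (c ⊙ y)).
  assert (Hv : v ≤ c) by (apply mle_trans with (c ⊙ x); [apply mmeet_lbl|apply mmul_le]).
  rewrite <- (mmul_oplus_neg c v Hv). apply mmul_mono; [apply mle_refl|].
  apply mmeet_glb.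
  - rewrite <- (oplus_neg_mmul c x Hx). apply oplus_mono; [apply mle_refl|apply mmeet_lbl].
  - rewrite <- (oplus_neg_mmul c y Hy). apply oplus_mono; [apply mle_refl|apply mmeet_lbr].
Qed.

Lemma mmul_neg_mmeet (x y : M) : x ⊙ ¬ y = x ⊙ ¬ mmeet x y.
Proof.
  apply mle_antisym.
  - apply mmul_mono; [apply mle_refl|]. apply neg_anti, mmeet_lbr.
  - rewrite neg_mmeet. apply mle_trans with (mjoin (x ⊙ ¬ x) (x ⊙ ¬ y)); [apply mmul_mjoin_le|].
    apply mjoin_lub; [rewrite mmul_neg; apply mle0x|apply mle_refl].
Qed.

Lemma prelinearity (x y : M) : mmeet (x ⊙ ¬ y) (y ⊙ ¬ x) = 0.
Proof.
  apply mle0. set (m := mmeet x y).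
  rewrite (mmul_neg_mmeet x y), (mmul_neg_mmeet y x), (mmeetC y x). fold m.
  rewrite (mmulC x), (mmulC y). apply mle_trans with (¬ m ⊙ mmeet x y).
  - apply mmul_mmeet_ge; rewrite negK; [apply mmeet_lbl|apply mmeet_lbr].
  - fold m. rewrite mmulC, mmul_neg. apply mle_refl.
Qed.

Lemma mmeet0_oplus (a c b : M) : mmeet a b = 0 -> mmeet c b = 0 -> mmeet (a ⊕ c) b = 0.
Proof.
  intros H1 H2. apply mle0. rewrite <- H1. apply mmeet_glb; [|apply mmeet_lbr].
  apply mle_trans with (mmeet (a ⊕ c) (a ⊕ b)).
  - apply mmeet_glb; [apply mmeet_lbl|]. apply mle_trans with b; [apply mmeet_lbr|apply mle_oplusl].
  - apply mle_trans with (a ⊕ mmeet c b); [apply mmeet_oplus_le|]. rewrite H2, oplus0. apply mle_refl.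
Qed.

Fixpoint mpow (x : M) (n : nat) : M := match n with O => 1 | S n => x ⊙ mpow x n end.
Definition msum (x : M) (n : nat) : M := ¬ mpow (¬ x) n.

Lemma msum_S (x : M) n : msum x (S n) = x ⊕ msum x n.
Proof. unfold msum; simpl. rewrite neg_mmul, negK; reflexivity. Qed.
Lemma msum_0 (x : M) : msum x 0 = 0. Proof. apply neg1. Qed.
Lemma mpowD (x : M) n m : mpow x (n + m) = mpow x n ⊙ mpow x m.
Proof. induction n; simpl; [rewrite mmulC, mmul1|rewrite IHn, mmulA]; reflexivity. Qed.
Lemma mpow_mono (x y : M) n : x ≤ y -> mpow x n ≤ mpow y n.
Proof. intros H; induction n; simpl; [apply mle_refl|apply mmul_mono; auto]. Qed.
Lemma msum_mono (x y : M) n : x ≤ y -> msum x n ≤ msum y n.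
Proof. intros H. apply neg_anti, mpow_mono, neg_anti, H. Qed.
Lemma mpow_mmul (x y : M) n : mpow (x ⊙ y) n = mpow x n ⊙ mpow y n.
Proof.
  induction n; simpl; [rewrite mmul1; reflexivity|].
  rewrite IHn, <- !mmulA. f_equal. rewrite !mmulA. f_equal. apply mmulC.
Qed.
Lemma mpow_one n : mpow 1 n = 1.
Proof. induction n; simpl; [|rewrite IHn, mmul1]; reflexivity. Qed.

Lemma mmeet0_msum (a b : M) n : mmeet a b = 0 -> mmeet (msum a n) b = 0.
Proof.
  intros H. induction n; [rewrite msum_0; apply mle0, mmeet_lbl|].
  rewrite msum_S. apply mmeet0_oplus; auto.
Qed.

End MVTheory.

Section Simple.
Variable S : MVSig.
Hypothesis HS : is_simple S.
Let HM : is_MV S := proj1 HS.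

Lemma simple_nilpotent (x : S) : x <> mone -> exists n, mpow S x n = mzero.
Proof.
  intros Hx. set (Fx := fun z : S => exists n, mle (mpow S x n) z).
  assert (HF : is_filter S Fx).
  { split; [|split].
    - exists mone, O. apply mle_refl; auto.
    - intros a b [n Hn] Hab. exists n. eapply mle_trans; eauto.
    - intros a b [n Hn] [m Hm]. exists (n + m)%nat. rewrite mpowD; auto. apply mmul_mono; auto. }
  destruct (proj2 (proj2 HS) Fx HF) as [H|H].
  - exfalso. apply Hx, H. exists 1%nat. simpl. rewrite mmul1; auto. apply mle_refl; auto.
  - destruct (H mzero) as [n Hn]. exists n. apply mle0; auto.
Qed.

(* If [x ⊙ ¬y] and [y ⊙ ¬x] were both nonzero, their complements would be nilpotent, so finite
   sums of them would reach [1]; prelinearity keeps such sums orthogonal, forcing [1 ∧ 1 = 0]. *)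
Lemma simple_total (x y : S) : mle x y \/ mle y x.
Proof.
  destruct (classic (mmul x (mneg y) = mzero)) as [H1|H1]; [left; apply mleE; auto|].
  destruct (classic (mmul y (mneg x) = mzero)) as [H2|H2]; [right; apply mleE; auto|].
  exfalso. set (a := mmul x (mneg y)) in *. set (b := mmul y (mneg x)) in *.
  assert (Ha : mneg a <> mone) by (intros E; apply H1, (neg_inj S HM); rewrite E; reflexivity).
  assert (Hb : mneg b <> mone) by (intros E; apply H2, (neg_inj S HM); rewrite E; reflexivity).
  destruct (simple_nilpotent _ Ha) as [n Hn]. destruct (simple_nilpotent _ Hb) as [m Hm].
  assert (Ea : msum S a n = mone) by (unfold msum; rewrite Hn; reflexivity).
  assert (Eb : msum S b m = mone) by (unfold msum; rewrite Hm; reflexivity).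
  pose proof (prelinearity S HM x y) as P. fold a b in P.
  apply (mmeet0_msum S HM a b n) in P. rewrite Ea, mmeetC in P; auto.
  apply (mmeet0_msum S HM b mone m) in P. rewrite Eb in P.
  assert (E11 : mmeet (@mone S) mone = mone) by (apply (mle1 S HM), (mmeet_glb S HM); apply (mle_refl S HM)).
  rewrite E11 in P. apply (proj1 (proj2 HS)). symmetry; auto.
Qed.
End Simple.

(* A preorder with Łukasiewicz operations and rational constants, in which every element lies,
   up to an arbitrarily small gap, above or below each constant ([rp_cst_dense]).  Measuring an
   element by the Dedekind cut of constants below it ([rp_value]) turns [⊕], [¬] into the
   standard operations of [0,1]: this is Hölder's theorem in the form needed here. *)
Record RatPreorder (T : Type) := {
  rp_le : T -> T -> Prop;
  rp_oplus : T -> T -> T;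
  rp_neg : T -> T;
  rp_cst : Q01 -> T;
  rp_refl : forall x, rp_le x x;
  rp_trans : forall x y z, rp_le x y -> rp_le y z -> rp_le x z;
  rp_neg_anti : forall x y, rp_le x y -> rp_le (rp_neg y) (rp_neg x);
  rp_negK : forall x, rp_le x (rp_neg (rp_neg x)) /\ rp_le (rp_neg (rp_neg x)) x;
  rp_oplus_mono : forall x y x' y', rp_le x x' -> rp_le y y' -> rp_le (rp_oplus x y) (rp_oplus x' y');
  rp_cst_le : forall q p, rp_le (rp_cst q) (rp_cst p) -> qv q <= qv p;
  rp_cst0 : forall q s, qv q = 0 -> rp_le (rp_cst q) s;
  rp_cst_neg : forall q p, qv p = 1 - qv q ->
    rp_le (rp_neg (rp_cst q)) (rp_cst p) /\ rp_le (rp_cst p) (rp_neg (rp_cst q));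
  rp_cst_oplus : forall q p t, qv t = qv q + qv p ->
    rp_le (rp_oplus (rp_cst q) (rp_cst p)) (rp_cst t) /\ rp_le (rp_cst t) (rp_oplus (rp_cst q) (rp_cst p));
  rp_cst_dense : forall q p s, qv q < qv p -> rp_le (rp_cst q) s \/ rp_le s (rp_cst p) }.

Section RatValue.
Context {T : Type} (P : RatPreorder T).
Local Notation le := (rp_le T P).
Local Notation c := (rp_cst T P).

Definition rp_value (s : T) : I01 :=
  sup01 (fun q : {q : Q01 | le (c q) s} => i01_cst (proj1_sig q)).

Lemma rp_value_ge q s : le (c q) s -> qv q <= v01 (rp_value s).
Proof. intros H. exact (sup01_ub (fun q : {q : Q01 | le (c q) s} => i01_cst (proj1_sig q)) (exist _ q H)). Qed.

Lemma rp_value_le p s : le s (c p) -> v01 (rp_value s) <= qv p.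
Proof.
  intros H. apply sup01_lub; [apply qv_bounds|]. intros [q' Hq']; rewrite v01_cst; simpl.
  apply (rp_cst_le T P). eapply (rp_trans T P); eauto.
Qed.

Lemma rp_value_lt q s : qv q < v01 (rp_value s) -> le (c q) s.
Proof.
  intros H. apply NNPP; intros Hn.
  enough (v01 (rp_value s) <= qv q) by lra.
  apply sup01_lub; [apply qv_bounds|]. intros [q' Hq']; rewrite v01_cst; simpl.
  apply Rnot_lt_le; intros Hlt. apply Hn, (rp_trans T P) with (c q'); auto.
  pose proof (qv_bounds q'). pose proof (qv_bounds q).
  destruct (exists_Q01_between (qv q) (qv q')) as [r Hr]; try lra.
  destruct (rp_cst_dense T P q r (c q')) as [H3|H3]; try lra; auto.
  apply (rp_cst_le T P) in H3; lra.
Qed.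

Lemma rp_value_gt p s : v01 (rp_value s) < qv p -> le s (c p).
Proof.
  intros H. pose proof (qv_bounds p). pose proof (v01_bounds (rp_value s)).
  destruct (exists_Q01_between (v01 (rp_value s)) (qv p)) as [q Hq]; try lra.
  destruct (rp_cst_dense T P q p s) as [Hx|Hx]; try lra; auto.
  apply rp_value_ge in Hx; lra.
Qed.

Lemma rp_value_cst q : v01 (rp_value (c q)) = qv q.
Proof. apply Rle_antisym; [apply rp_value_le|apply rp_value_ge]; apply (rp_refl T P). Qed.

Lemma rp_value_neg s : v01 (rp_value (rp_neg T P s)) = 1 - v01 (rp_value s).
Proof.
  pose proof (v01_bounds (rp_value s)). pose proof (v01_bounds (rp_value (rp_neg T P s))).
  destruct (rp_negK T P s) as [Hs1 Hs2].
  destruct (Rtotal_order (v01 (rp_value (rp_neg T P s))) (1 - v01 (rp_value s))) as [Hlt|[E|Hgt]];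
    auto; exfalso.
  - destruct (exists_Q01_between (v01 (rp_value (rp_neg T P s))) (1 - v01 (rp_value s))) as [q Hq];
      try lra.
    assert (H2 : le (c (qcompl q)) s).
    { apply (rp_trans T P) with (rp_neg T P (c q)); [apply (rp_cst_neg T P); rewrite qv_qcompl; lra|].
      apply (rp_trans T P) with (rp_neg T P (rp_neg T P s)); auto.
      apply (rp_neg_anti T P), rp_value_gt; lra. }
    apply rp_value_ge in H2. rewrite qv_qcompl in H2. lra.
  - destruct (exists_Q01_between (1 - v01 (rp_value s)) (v01 (rp_value (rp_neg T P s)))) as [q Hq];
      try lra.
    assert (H2 : le s (c (qcompl q))).
    { apply (rp_trans T P) with (rp_neg T P (rp_neg T P s)); auto.
      apply (rp_trans T P) with (rp_neg T P (c q)); [apply (rp_neg_anti T P), rp_value_lt; lra|].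
      apply (rp_cst_neg T P); rewrite qv_qcompl; lra. }
    apply rp_value_le in H2. rewrite qv_qcompl in H2. lra.
Qed.

Lemma rp_value_oplus_le s t :
  v01 (rp_value (rp_oplus T P s t)) <= Rmin (v01 (rp_value s) + v01 (rp_value t)) 1.
Proof.
  pose proof (v01_bounds (rp_value s)). pose proof (v01_bounds (rp_value t)).
  pose proof (v01_bounds (rp_value (rp_oplus T P s t))).
  set (a := v01 (rp_value s)) in *. set (b := v01 (rp_value t)) in *.
  set (m := v01 (rp_value (rp_oplus T P s t))) in *.
  apply Rnot_lt_le; intros Hlt. unfold Rmin in Hlt; destruct Rle_dec as [Hab|Hab]; [|lra].
  destruct (exists_Q01_between a (a + (m - a - b) / 2)) as [q Hq]; try lra.
  destruct (exists_Q01_between b (b + (m - a - b) / 2)) as [p Hp]; try lra.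
  assert (Hs : qv q + qv p <= 1) by lra.
  assert (Hle : le (rp_oplus T P s t) (c (qadd q p Hs))).
  { apply (rp_trans T P) with (rp_oplus T P (c q) (c p)).
    - apply (rp_oplus_mono T P); apply rp_value_gt; fold a b; lra.
    - apply (rp_cst_oplus T P); rewrite qv_qadd; reflexivity. }
  apply rp_value_le in Hle. fold m in Hle. rewrite qv_qadd in Hle. lra.
Qed.

Lemma rp_value_oplus_ge s t :
  Rmin (v01 (rp_value s) + v01 (rp_value t)) 1 <= v01 (rp_value (rp_oplus T P s t)).
Proof.
  pose proof (v01_bounds (rp_value s)). pose proof (v01_bounds (rp_value t)).
  pose proof (v01_bounds (rp_value (rp_oplus T P s t))).
  set (a := v01 (rp_value s)) in *. set (b := v01 (rp_value t)) in *.
  set (m := v01 (rp_value (rp_oplus T P s t))) in *.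
  apply Rnot_lt_le; intros Hlt.
  (* truncate [b] so that the rational approximations below stay summable *)
  set (b' := Rmin b (1 - a)).
  assert (Hb' : 0 <= b' <= b /\ b' <= 1 - a /\ Rmin (a + b) 1 = a + b') by (unfold b'; minmax).
  destruct (exists_Q01_below a ((a + b' - m) / 2)) as [q [Hq1 Hq2]]; try lra.
  destruct (exists_Q01_below b' ((a + b' - m) / 2)) as [p [Hp1 Hp2]]; try lra.
  assert (Hs : qv q + qv p <= 1) by lra.
  assert (Hle : le (c (qadd q p Hs)) (rp_oplus T P s t)).
  { apply (rp_trans T P) with (rp_oplus T P (c q) (c p)).
    - apply (rp_cst_oplus T P); rewrite qv_qadd; reflexivity.
    - apply (rp_oplus_mono T P).
      + destruct Hq2; [apply rp_value_lt; fold a; lra|apply (rp_cst0 T P); auto].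
      + destruct Hp2; [apply rp_value_lt; fold b; lra|apply (rp_cst0 T P); auto]. }
  apply rp_value_ge in Hle. fold m in Hle. rewrite qv_qadd in Hle. lra.
Qed.

Lemma rp_value_oplus s t :
  v01 (rp_value (rp_oplus T P s t)) = Rmin (v01 (rp_value s) + v01 (rp_value t)) 1.
Proof. apply Rle_antisym; [apply rp_value_oplus_le|apply rp_value_oplus_ge]. Qed.

End RatValue.

Section SimpleValue.
Variable S : MVSig.
Hypothesis HS : is_simple S.
Let HM : is_MV S := proj1 HS.
Variable c : Q01 -> S.
Hypothesis Hc0 : forall r : Q01, qv r = 0 -> c r = mzero.
Hypothesis Hcp : forall r s t : Q01, Rmin (qv r + qv s) 1 = qv t -> moplus (c r) (c s) = c t.
Hypothesis Hcn : forall r s : Q01, 1 - qv r = qv s -> mneg (c r) = c s.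

Lemma cst_eq1 t : qv t = 1 -> c t = mone.
Proof. intros H. unfold mone. rewrite <- (Hc0 q0 qv_q0). symmetry; apply Hcn. rewrite qv_q0; lra. Qed.

Lemma msum_cst (e : Q01) n : exists t : Q01, qv t = Rmin (INR n * qv e) 1 /\ msum S (c e) n = c t.
Proof.
  induction n as [|n [t [Ht Et]]].
  - exists q0. rewrite qv_q0, msum_0; auto. split; [simpl; minmax|]. symmetry; apply Hc0, qv_q0.
  - destruct (exists_Q01_trunc_add e t) as [t' Ht'].
    exists t'. rewrite msum_S, Et; auto. split; [|apply Hcp; auto].
    rewrite Ht', Ht, S_INR. pose proof (qv_bounds e). unfold Rmin; repeat destruct Rle_dec; nra.
Qed.

Lemma cst_eq1_inv t : c t = mone -> qv t = 1.
Proof.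
  intros Ht. pose proof (qv_bounds t). apply NNPP; intros Hn.
  assert (E0 : c (qcompl t) = mzero).
  { rewrite <- (Hcn t (qcompl t)) by (rewrite qv_qcompl; lra). rewrite Ht. apply neg1; auto. }
  destruct (INR_archimed (1 - qv t) 1) as [N HN]; [lra|].
  destruct (msum_cst (qcompl t) N) as [t' [Ht' Et']].
  rewrite E0 in Et'. unfold msum in Et'. rewrite mpow_one, neg1 in Et'; auto.
  rewrite qv_qcompl in Ht'. assert (Ht'1 : qv t' = 1) by (rewrite Ht'; minmax).
  apply (proj1 (proj2 HS)). rewrite Et'. apply cst_eq1, Ht'1.
Qed.

Lemma cst_mle_iff q p : mle (c q) (c p) <-> qv q <= qv p.
Proof.
  pose proof (qv_bounds q) as Hq; pose proof (qv_bounds p) as Hp.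
  unfold mle. rewrite (Hcn q (qcompl q)) by (rewrite qv_qcompl; lra).
  destruct (exists_Q01_trunc_add (qcompl q) p) as [t Ht]. rewrite (Hcp _ _ t) by auto.
  rewrite qv_qcompl in Ht. split.
  - intros H. apply cst_eq1_inv in H. minmax.
  - intros H. apply cst_eq1. rewrite Ht. minmax.
Qed.

Definition simple_ratpre : RatPreorder S.
Proof.
  refine {| rp_le := @mle S; rp_oplus := @moplus S; rp_neg := @mneg S; rp_cst := c |}.
  - apply mle_refl; auto.
  - apply mle_trans; auto.
  - apply neg_anti; auto.
  - intros x. rewrite negK; auto. split; apply mle_refl; auto.
  - apply oplus_mono; auto.
  - intros q p. apply cst_mle_iff.
  - intros q s H. rewrite Hc0; auto. apply mle0x; auto.
  - intros q p H. rewrite (Hcn q p) by lra. split; apply mle_refl; auto.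
  - intros q p t H. pose proof (qv_bounds t). rewrite (Hcp q p t) by minmax. split; apply mle_refl; auto.
  - intros q p s H. destruct (simple_total S HS (c q) s) as [H1|H1]; auto.
    right. apply mle_trans with (c q); auto. apply cst_mle_iff; lra.
Defined.

Local Notation sval s := (v01 (rp_value simple_ratpre s)).

Lemma simple_value_neg (s : S) : sval (mneg s) = 1 - sval s.
Proof. exact (rp_value_neg simple_ratpre s). Qed.

Lemma simple_value_oplus (s t : S) : sval (moplus s t) = Rmin (sval s + sval t) 1.
Proof. exact (rp_value_oplus simple_ratpre s t). Qed.

Lemma simple_value_cst q : sval (c q) = qv q.
Proof. exact (rp_value_cst simple_ratpre q). Qed.

Lemma simple_value_eq1 (u : S) : sval u = 1 -> u = mone.
Proof.
  intros Hu. apply NNPP; intros Hn. destruct (simple_nilpotent S HS u Hn) as [n Hnil].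
  assert (E1 : msum S (mneg u) n = mone) by (unfold msum; rewrite negK, Hnil; auto).
  assert (Hn1 : 0 < / (INR n + 1)) by (apply Rinv_0_lt_compat; pose proof (pos_INR n); lra).
  destruct (exists_Q01_between 0 (/ (INR n + 1))) as [e He]; try lra.
  assert (Hne : qv e * (INR n + 1) < 1).
  { pose proof (pos_INR n).
    apply Rlt_le_trans with (/ (INR n + 1) * (INR n + 1)); [apply Rmult_lt_compat_r; lra|].
    rewrite Rinv_l; lra. }
  assert (Hle : mle (mneg u) (c e)).
  { apply (rp_value_gt simple_ratpre). change (sval (mneg u) < qv e). rewrite simple_value_neg. lra. }
  apply (msum_mono S HM _ _ n) in Hle. rewrite E1 in Hle.
  destruct (msum_cst e n) as [t [Ht Et]]. rewrite Et in Hle.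
  apply (mle1 S HM), cst_eq1_inv in Hle. rewrite Ht in Hle. minmax.
Qed.

Lemma simple_value_inj (s t : S) : sval s = sval t -> s = t.
Proof.
  intros E. pose proof (v01_bounds (rp_value simple_ratpre s)).
  apply (mle_antisym S HM); apply simple_value_eq1;
    rewrite simple_value_oplus, simple_value_neg, E; minmax.
Qed.

Lemma simple_value_0 : sval mzero = 0.
Proof. rewrite <- (Hc0 q0 qv_q0), simple_value_cst; apply qv_q0. Qed.

End SimpleValue.

(* Concrete form of semisimplicity: a separating family of Pavelka homomorphisms into [0,1],
   kept real-valued so that identities can be checked pointwise by linear arithmetic. *)
Record Representation (A : PSig) : Type := {
  rep_index : Type;
  rep : A -> rep_index -> R;
  rep_bounds : forall x k, 0 <= rep x k <= 1;
  rep_oplus : forall x y k, rep (moplus x y) k = Rmin (rep x k + rep y k) 1;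
  rep_neg : forall x k, rep (mneg x) k = 1 - rep x k;
  rep_cst : forall q k, rep (pcst q) k = qv q;
  rep_zero : forall k, rep mzero k = 0;
  rep_inj : forall x y, (forall k, rep x k = rep y k) -> x = y }.

Lemma semisimple_representation (A : PSig) :
  is_Pavelka A -> semisimple A -> inhabited (Representation A).
Proof.
  intros [HMV [HP0 [HPp HPn]]] [K [S [e [Hsimp [Hhom [Hinj _]]]]]].
  set (c := fun k (q : Q01) => e (pcst q) k).
  assert (Hc0 : forall k r, qv r = 0 -> c k r = mzero).
  { intros k r H. unfold c. rewrite <- (HP0 r H). apply (Hhom k). }
  assert (Hcp : forall k r s t, Rmin (qv r + qv s) 1 = qv t -> moplus (c k r) (c k s) = c k t).
  { intros k r s t H. unfold c. rewrite <- (HPp r s t H). symmetry; apply (Hhom k). }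
  assert (Hcn : forall k r s, 1 - qv r = qv s -> mneg (c k r) = c k s).
  { intros k r s H. unfold c. rewrite <- (HPn r s H). symmetry; apply (Hhom k). }
  constructor.
  refine {| rep_index := K;
            rep := fun x k => v01 (rp_value (simple_ratpre (S k) (Hsimp k) (c k) (Hc0 k) (Hcp k) (Hcn k)) (e x k)) |}.
  - intros; apply v01_bounds.
  - intros x y k. destruct (Hhom k) as [H1 _]. rewrite H1. apply simple_value_oplus.
  - intros x k. destruct (Hhom k) as [_ [H2 _]]. rewrite H2. apply simple_value_neg.
  - intros q k. exact (simple_value_cst (S k) (Hsimp k) (c k) (Hc0 k) (Hcp k) (Hcn k) q).
  - intros k. destruct (Hhom k) as [_ [_ H3]]. rewrite H3. apply simple_value_0.
  - intros x y H. apply Hinj. intros k. exact (simple_value_inj _ _ _ _ _ _ _ _ (H k)).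
Qed.

Section RepresentationPointwise.
Variable A : PSig.
Variable RD : Representation A.
Local Notation f := (rep A RD).

Lemma rep_one k : f mone k = 1.
Proof. unfold mone. rewrite rep_neg, rep_zero; lra. Qed.

Lemma rep_mul x y k : f (mmul x y) k = Rmax 0 (f x k + f y k - 1).
Proof.
  unfold mmul. rewrite rep_neg, rep_oplus, !rep_neg.
  pose proof (rep_bounds A RD x k); pose proof (rep_bounds A RD y k). minmax.
Qed.

Lemma rep_arrow x y k : f (marrow x y) k = Rmin 1 (1 - f x k + f y k).
Proof.
  unfold marrow. rewrite rep_oplus, rep_neg.
  pose proof (rep_bounds A RD x k); pose proof (rep_bounds A RD y k). minmax.
Qed.

Lemma rep_mle x y : mle x y <-> forall k, f x k <= f y k.
Proof.
  unfold mle. split.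
  - intros H k. pose proof (f_equal (fun z => f z k) H) as E. simpl in E.
    rewrite rep_oplus, rep_neg, rep_one in E.
    pose proof (rep_bounds A RD x k); pose proof (rep_bounds A RD y k). minmax.
  - intros H. apply (rep_inj A RD). intros k. rewrite rep_oplus, rep_neg, rep_one. specialize (H k).
    pose proof (rep_bounds A RD x k); pose proof (rep_bounds A RD y k). minmax.
Qed.

Lemma rep_pow x n k : f (mpow A x n) k = Rmax 0 (INR n * f x k - (INR n - 1)).
Proof.
  pose proof (rep_bounds A RD x k). induction n as [|n IHn]; simpl mpow.
  - rewrite rep_one. simpl. minmax.
  - rewrite rep_mul, IHn, S_INR. pose proof (pos_INR n).
    unfold Rmax; repeat destruct Rle_dec; nra.
Qed.
End RepresentationPointwise.

Section Filters.
Variable M : MVSig.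
Hypothesis HM : is_MV M.

Lemma filter_up F (x y : M) : is_filter M F -> F x -> mle x y -> F y.
Proof. intros [_ [H _]] Hx Hxy; eauto. Qed.

Lemma filter_mul F (x y : M) : is_filter M F -> F x -> F y -> F (mmul x y).
Proof. intros [_ [_ H]]; eauto. Qed.

Lemma filter_one F : is_filter M F -> F mone.
Proof. intros HF. pose proof HF as [[x Hx] _]. apply filter_up with x; auto. apply mlex1; auto. Qed.

Lemma filter_pow F (x : M) n : is_filter M F -> F x -> F (mpow M x n).
Proof. intros HF Hx. induction n; simpl; [apply filter_one|apply filter_mul]; auto. Qed.

Lemma proper_filter_not0 F : is_proper_filter M F -> ~ F mzero.
Proof. intros [HF [x Hx]] H0. apply Hx, filter_up with mzero; auto. apply mle0x; auto. Qed.

Lemma proper_filterI F : is_filter M F -> ~ F mzero -> is_proper_filter M F.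
Proof. intros H1 H2; split; auto; exists mzero; auto. Qed.

Definition pow_upset (D : M -> Prop) (z : M) : Prop :=
  exists s, D s /\ exists n, mle (mpow M s n) z.

Lemma pow_upset_filter (D : M -> Prop) :
  (exists s, D s) -> (forall s1 s2, D s1 -> D s2 -> exists s, D s /\ mle s s1 /\ mle s s2) ->
  is_filter M (pow_upset D).
Proof.
  intros [s0 Hs0] Hdir. split; [|split].
  - exists mone, s0. split; auto. exists O. apply mle_refl; auto.
  - intros a b [s [Hs [n Hn]]] Hab. exists s. split; auto. exists n. eapply mle_trans; eauto.
  - intros a b [s1 [Hs1 [n1 Hn1]]] [s2 [Hs2 [n2 Hn2]]].
    destruct (Hdir s1 s2 Hs1 Hs2) as [s [Hs [H1 H2]]].
    exists s. split; auto. exists (n1 + n2)%nat. rewrite mpowD; auto.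
    apply mmul_mono; auto; eapply mle_trans; eauto; apply mpow_mono; auto.
Qed.

Lemma pow_upset_incl (D : M -> Prop) s : D s -> pow_upset D s.
Proof. intros Hs. exists s. split; auto. exists 1%nat. simpl. rewrite mmul1; auto. apply mle_refl; auto. Qed.

Lemma maximal_filter_annihilate F u : is_maximal_filter M F -> ~ F u ->
  exists g, F g /\ exists n, mmul g (mpow M u n) = mzero.
Proof.
  intros [HF Hmax] Hu. destruct HF as [HF _].
  set (D := fun s => exists g, F g /\ s = mmul g u).
  assert (HD : is_filter M (pow_upset D)).
  { apply pow_upset_filter.
    - exists (mmul mone u), mone. split; auto. apply filter_one; auto.
    - intros s1 s2 [g1 [Hg1 ->]] [g2 [Hg2 ->]]. exists (mmul (mmul g1 g2) u).
      split; [exists (mmul g1 g2); split; auto; apply filter_mul; auto|].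
      split; apply mmul_monol; auto; [apply mmul_le|rewrite mmulC]; auto; apply mmul_le; auto. }
  destruct (classic (pow_upset D mzero)) as [[s [[g [Hg ->]] [n Hn]]]|H0].
  - exists (mpow M g n). split; [apply filter_pow; auto|]. exists n.
    rewrite <- mpow_mmul; auto. apply mle0; auto.
  - exfalso. apply Hu, (Hmax (pow_upset D)); [apply proper_filterI; auto| |].
    + intros x Hx. apply filter_up with (mmul x u); [auto|apply pow_upset_incl; exists x; auto|].
      apply mmul_le; auto.
    + apply filter_up with (mmul mone u); [auto|apply pow_upset_incl; exists mone; split; auto; apply filter_one; auto|].
      rewrite mmulC; auto. apply mmul_le; auto.
Qed.

Lemma zorn_sets (T : Type) (P : (T -> Prop) -> Prop) :
  (forall C : (T -> Prop) -> Prop, (forall X, C X -> P X) ->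
     (forall X Y, C X -> C Y -> (forall t, X t -> Y t) \/ (forall t, Y t -> X t)) ->
     P (fun a => exists X, C X /\ X a)) ->
  exists X0, P X0 /\ forall Y, (forall t, X0 t -> Y t) -> ~ (forall t, Y t -> X0 t) -> ~ P Y.
Proof.
  intros H. destruct (@classical_sets.Zorn_bigcup T P) as [X0 [HX0 Hmax]].
  - intros C HC Htot.
    replace (classical_sets.bigcup C (fun X => X)) with (fun a => exists X, C X /\ X a).
    + apply H; [exact HC|]. intros X Y HX HY. destruct (Htot X Y HX HY); auto.
    + apply functional_extensionality; intros a. apply propositional_extensionality.
      split; [intros [X [H1 H2]]; exists X; auto|intros [X H1 H2]; exists X; auto].
  - exists X0; split; auto. intros Y H1 H2 H3. apply (Hmax Y); auto. split; auto.
Qed.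

(* The [\/ H0] makes the union of an empty chain a filter as well. *)
Lemma chain_filter_union (H0 : M -> Prop) (C : (M -> Prop) -> Prop) :
  is_proper_filter M H0 ->
  (forall X, C X -> is_proper_filter M (fun a => X a \/ H0 a)) ->
  (forall X Y, C X -> C Y -> (forall t, X t -> Y t) \/ (forall t, Y t -> X t)) ->
  is_proper_filter M (fun a => (exists X, C X /\ X a) \/ H0 a).
Proof.
  intros HH HC Htot. destruct HH as [[[x Hx] [Hup Hmul]] HH0].
  apply proper_filterI; [split; [|split]|].
  - exists x; auto.
  - intros a b [[X [HX Ha]]|Ha] Hab; [|right; eauto].
    destruct (HC X HX) as [[_ [Hu _]] _]. destruct (Hu a b (or_introl Ha) Hab); eauto.
  - assert (Hin : forall X a b, C X -> X a \/ H0 a -> X b \/ H0 b ->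
                    (exists Y, C Y /\ Y (mmul a b)) \/ H0 (mmul a b)).
    { intros X a b HX Ha Hb. destruct (HC X HX) as [[_ [_ Hm]] _].
      destruct (Hm a b Ha Hb); eauto. }
    intros a b [[X [HX Ha]]|Ha] [[Y [HY Hb]]|Hb]; eauto.
    destruct (Htot X Y HX HY) as [S|S]; [apply (Hin Y)|apply (Hin X)]; auto.
  - intros [[X [HX H0X]]|H00].
    + apply (proper_filter_not0 _ (HC X HX)). auto.
    + apply (proper_filter_not0 _ (conj (conj (ex_intro _ x Hx) (conj Hup Hmul)) HH0)). auto.
Qed.

Lemma proper_filter_maximal_ext (H0 : M -> Prop) : is_proper_filter M H0 ->
  exists F, is_maximal_filter M F /\ forall x, H0 x -> F x.
Proof.
  intros HH. set (P := fun X : M -> Prop => is_proper_filter M (fun a => X a \/ H0 a)).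
  destruct (zorn_sets M P) as [X0 [HX0 Hmax]].
  - intros C HC Htot. apply chain_filter_union; auto.
  - exists (fun a => X0 a \/ H0 a). split; [split; auto|intros x Hx; right; auto].
    intros G HG HsubG x Gx.
    assert (HHG : forall a, H0 a -> G a) by (intros a Ha; apply HsubG; right; auto).
    assert (PG : P G).
    { destruct HG as [[Gne [Gup Gmul]] [y Hy]]. split; [split; [|split]|].
      - destruct Gne as [z Hz]; exists z; auto.
      - intros a b [Ha|Ha] Hab; left; eauto.
      - intros a b [Ha|Ha] [Hb|Hb]; left; eauto.
      - exists y. intros [Hy'|Hy']; auto. }
    destruct (classic (forall t, G t -> X0 t)) as [Hs|Hs]; [left; auto|].
    exfalso. apply (Hmax G); auto.
Qed.
End Filters.


Section HomToUnitInterval.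
Variables (A : PSig) (phi : A -> I01).
Hypothesis Hphi : is_MVhom A std01 phi.

Lemma std01_hom_one : phi mone = @mone std01.
Proof. destruct Hphi as [_ [Hn H0]]. unfold mone. rewrite Hn, H0; reflexivity. Qed.

Lemma std01_hom_mmul1 x y : v01 (phi x) = 1 -> v01 (phi y) = 1 -> v01 (phi (mmul x y)) = 1.
Proof.
  destruct Hphi as [Hp [Hn _]]. intros Hx Hy. unfold mmul. rewrite Hn, Hp, !Hn.
  change (v01 (i01_neg (i01_oplus (i01_neg (phi x)) (i01_neg (phi y)))) = 1).
  rewrite v01_neg, v01_oplus, !v01_neg, Hx, Hy. minmax.
Qed.
End HomToUnitInterval.
Section MaximalFilter.
Variable A : PSig.
Variable RD : Representation A.
Hypothesis HP : is_Pavelka A.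
Let HM : is_MV A := proj1 HP.
Local Notation f := (rep A RD).
Let rb := rep_bounds A RD.
Variable F : A -> Prop.
Hypothesis HF : is_maximal_filter A F.
Let HF1 : is_filter A F := proj1 (proj1 HF).

Lemma maximal_filter_excludes_small (z : A) v : v < 1 -> (forall k, f z k <= v) -> ~ F z.
Proof.
  intros Hv Hz Fz. destruct (INR_archimed (1 - v) 1) as [n Hn]; [lra|].
  apply (proper_filter_not0 A HM F (proj1 HF)).
  apply filter_up with (mpow A z n); [|apply filter_pow|]; auto.
  apply (rep_mle A RD). intros k. rewrite rep_pow, rep_zero. specialize (Hz k). pose proof (pos_INR n).
  assert (INR n * f z k <= INR n * v) by (apply Rmult_le_compat_l; auto).
  unfold Rmax; destruct Rle_dec; nra.
Qed.

Lemma maximal_filter_prime (x y : A) : F (marrow x y) \/ F (marrow y x).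
Proof.
  destruct (classic (F (marrow x y))) as [H|H]; auto.
  destruct (classic (F (marrow y x))) as [H'|H']; auto. exfalso.
  destruct (maximal_filter_annihilate A HM F _ HF H) as [g1 [Hg1 [n1 E1]]].
  destruct (maximal_filter_annihilate A HM F _ HF H') as [g2 [Hg2 [n2 E2]]].
  apply (proper_filter_not0 A HM F (proj1 HF)).
  replace mzero with (mmul g1 g2); [apply filter_mul; auto|].
  apply (rep_inj A RD). intros k. rewrite rep_mul, rep_zero.
  apply (f_equal (fun z => f z k)) in E1, E2.
  rewrite rep_mul, rep_pow, rep_arrow, rep_zero in E1, E2.
  pose proof (rb g1 k); pose proof (rb g2 k); pose proof (rb x k); pose proof (rb y k).
  destruct (Rle_dec (f x k) (f y k)).
  - replace (Rmin 1 (1 - f x k + f y k)) with 1 in E1 by minmax.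
    replace (INR n1 * 1 - (INR n1 - 1)) with 1 in E1 by ring. minmax.
  - replace (Rmin 1 (1 - f y k + f x k)) with 1 in E2 by minmax.
    replace (INR n2 * 1 - (INR n2 - 1)) with 1 in E2 by ring. minmax.
Qed.

Lemma maximal_filter_pointwise1 (z : A) : (forall k, f z k = 1) -> F z.
Proof.
  intros H. apply filter_up with mone; [|apply filter_one|]; auto.
  apply (rep_mle A RD). intros k. rewrite rep_one, H; lra.
Qed.

Lemma maximal_filter_pointwise_up (a z : A) : F a -> (forall k, f a k <= f z k) -> F z.
Proof. intros Ha H. apply filter_up with a; auto. apply (rep_mle A RD); auto. Qed.

Lemma maximal_filter_pointwise_mul (a b z : A) :
  F a -> F b -> (forall k, Rmax 0 (f a k + f b k - 1) <= f z k) -> F z.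
Proof.
  intros Ha Hb H. apply maximal_filter_pointwise_up with (mmul a b); [apply filter_mul; auto|].
  intros k; rewrite rep_mul; auto.
Qed.

(* The order of [A/F]: [x ≤_F y] iff [x → y ∈ F]. *)
Definition quotient_ratpre : RatPreorder A.
Proof.
  refine {| rp_le := fun x y => F (marrow x y); rp_oplus := @moplus A; rp_neg := @mneg A;
            rp_cst := @pcst A |}.
  - intros x. apply maximal_filter_pointwise1; intros k; rewrite rep_arrow; minmax.
  - intros x y z H1 H2. apply (maximal_filter_pointwise_mul _ _ _ H1 H2). intros k. rewrite !rep_arrow.
    pose proof (rb x k); pose proof (rb y k); pose proof (rb z k). minmax.
  - intros x y H. apply (maximal_filter_pointwise_up _ _ H). intros k. rewrite !rep_arrow, !rep_neg. minmax.
  - intros x. split; apply maximal_filter_pointwise1; intros k; rewrite rep_arrow, !rep_neg; minmax.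
  - intros x y x' y' H1 H2. apply (maximal_filter_pointwise_mul _ _ _ H1 H2). intros k.
    rewrite !rep_arrow, !rep_oplus.
    pose proof (rb x k); pose proof (rb y k); pose proof (rb x' k); pose proof (rb y' k). minmax.
  - intros q p H. apply Rnot_lt_le; intros Hlt. pose proof (qv_bounds q); pose proof (qv_bounds p).
    apply (maximal_filter_excludes_small (marrow (pcst q) (pcst p)) (1 - qv q + qv p)); auto; [lra|].
    intros k. rewrite rep_arrow, !rep_cst. minmax.
  - intros q s H. apply maximal_filter_pointwise1; intros k. rewrite rep_arrow, rep_cst.
    pose proof (rb s k). minmax.
  - intros q p H. split; apply maximal_filter_pointwise1; intros k;
      rewrite rep_arrow, rep_neg, !rep_cst; minmax.
  - intros q p t H. pose proof (qv_bounds t); pose proof (qv_bounds q); pose proof (qv_bounds p).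
    split; apply maximal_filter_pointwise1; intros k; rewrite rep_arrow, rep_oplus, !rep_cst; minmax.
  - intros q p s H. destruct (maximal_filter_prime (pcst q) s) as [H1|H1]; [left; auto|right].
    apply (maximal_filter_pointwise_up _ _ H1). intros k. rewrite !rep_arrow, !rep_cst. minmax.
Defined.

Definition quotient_value : A -> I01 := rp_value quotient_ratpre.

Lemma quotient_value_is_Phom : is_Phom A std01 quotient_value.
Proof.
  split; [split; [|split]|].
  - intros x y. apply I01_eq. exact (rp_value_oplus quotient_ratpre x y).
  - intros x. apply I01_eq. exact (rp_value_neg quotient_ratpre x).
  - apply I01_eq. rewrite ((proj1 (proj2 HP)) q0 qv_q0).
    transitivity (qv q0); [exact (rp_value_cst quotient_ratpre q0)|apply qv_q0].
  - intros q. apply I01_eq. exact (rp_value_cst quotient_ratpre q).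
Qed.

Lemma quotient_value_kernel a : F a <-> v01 (quotient_value a) = 1.
Proof.
  assert (Hker : forall a, F a -> v01 (quotient_value a) = 1).
  { intros b Hb. apply Rle_antisym; [apply v01_bounds|]. rewrite <- qv_q1.
    apply (rp_value_ge quotient_ratpre). change (F (marrow (pcst q1) b)).
    apply (maximal_filter_pointwise_up _ _ Hb). intros k.
    rewrite rep_arrow, rep_cst, qv_q1. pose proof (rb b k). minmax. }
  split; [apply Hker|]. intros Ha. apply NNPP; intros Hn.
  destruct (maximal_filter_annihilate A HM F a HF Hn) as [g [Hg [n Hgn]]].
  assert (Hpow : forall n, v01 (quotient_value (mpow A a n)) = 1).
  { induction n0 as [|n0 IH].
    - change (v01 (quotient_value mone) = 1).
      rewrite (std01_hom_one A _ (proj1 quotient_value_is_Phom)). simpl; lra.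
    - apply (std01_hom_mmul1 A _ (proj1 quotient_value_is_Phom)); auto. }
  pose proof (std01_hom_mmul1 A _ (proj1 quotient_value_is_Phom) g (mpow A a n) (Hker g Hg) (Hpow n)) as H1.
  rewrite Hgn, (proj2 (proj2 (proj1 quotient_value_is_Phom))) in H1. simpl in H1. lra.
Qed.
End MaximalFilter.

Lemma quot_hom_spec (A : PSig) (RD : Representation A) (HP : is_Pavelka A) (F : SpecM A) :
  is_Phom A std01 (quot_hom A F) /\ (forall a, proj1_sig F a <-> quot_hom A F a = @mone std01).
Proof.
  unfold quot_hom. apply epsilon_spec.
  exists (quotient_value A RD HP _ (proj2_sig F)).
  split; [apply quotient_value_is_Phom|]. intros a.
  rewrite (quotient_value_kernel A RD HP _ (proj2_sig F)).
  split; [intros E; apply I01_eq; rewrite E; simpl; lra|intros ->; simpl; lra].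
Qed.

Section Quotient.
Variable A : PSig.
Variable RD : Representation A.
Hypothesis HP : is_Pavelka A.
Variable F : SpecM A.
Local Notation qa x := (v01 (quot A x F)).
Let HQ := quot_hom_spec A RD HP F.

Lemma quot_oplus x y : qa (moplus x y) = Rmin (qa x + qa y) 1.
Proof. unfold quot. destruct HQ as [[[H _] _] _]. rewrite H. reflexivity. Qed.

Lemma quot_neg x : qa (mneg x) = 1 - qa x.
Proof. unfold quot. destruct HQ as [[[_ [H _]] _] _]. rewrite H. reflexivity. Qed.

Lemma quot_cst r : qa (pcst r) = qv r.
Proof. unfold quot. destruct HQ as [[_ H] _]. rewrite H. reflexivity. Qed.

Lemma quot_one : qa mone = 1.
Proof.
  unfold mone. rewrite quot_neg. unfold quot. destruct HQ as [[[_ [_ H]] _] _]. rewrite H.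
  simpl; lra.
Qed.

Lemma quot_mul x y : qa (mmul x y) = Rmax 0 (qa x + qa y - 1).
Proof.
  unfold mmul. rewrite quot_neg, quot_oplus, !quot_neg.
  pose proof (v01_bounds (quot A x F)); pose proof (v01_bounds (quot A y F)). minmax.
Qed.

Lemma quot_arrow x y : qa (marrow x y) = Rmin 1 (1 - qa x + qa y).
Proof.
  unfold marrow. rewrite quot_oplus, quot_neg.
  pose proof (v01_bounds (quot A x F)); pose proof (v01_bounds (quot A y F)). minmax.
Qed.

Lemma quot_mono x y : mle x y -> qa x <= qa y.
Proof.
  unfold mle; intros H. apply (f_equal (fun z => qa z)) in H.
  rewrite quot_oplus, quot_neg, quot_one in H.
  pose proof (v01_bounds (quot A x F)); pose proof (v01_bounds (quot A y F)). minmax.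
Qed.

Lemma quot_eq1 a : proj1_sig F a <-> qa a = 1.
Proof.
  destruct HQ as [_ H]. rewrite H. split; intros E.
  - unfold quot; rewrite E; simpl; lra.
  - apply I01_eq. unfold quot in E; rewrite E. simpl; lra.
Qed.
End Quotient.

Lemma rep_pow_annihilates (A : PSig) (RD : Representation A) (x b : A) (s : Q01) n :
  mpow A (mmul (marrow b (mmul (pcst s) x)) (marrow (pcst (qcompl s)) x)) n = mzero ->
  mle (mmul (pcst s) x) b.
Proof.
  intros Hn. apply (rep_mle A RD). intros k. apply (f_equal (fun z => rep A RD z k)) in Hn.
  rewrite rep_pow, rep_mul, !rep_arrow, rep_mul, !rep_cst, rep_zero, qv_qcompl in Hn.
  rewrite rep_mul, rep_cst.
  pose proof (rep_bounds A RD x k); pose proof (rep_bounds A RD b k); pose proof (qv_bounds s).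
  set (X := rep A RD x k) in *. set (Y := rep A RD b k) in *.
  destruct (Rle_dec (1 - qv s) X) as [Hx|Hx]; [|minmax].
  replace (Rmin 1 (1 - (1 - qv s) + X)) with 1 in Hn by minmax.
  apply Rnot_lt_le; intros Hlt.
  replace (Rmin 1 (1 - Y + Rmax 0 (qv s + X - 1))) with 1 in Hn by minmax.
  replace (Rmax 0 (1 + 1 - 1)) with 1 in Hn by minmax.
  replace (INR n * 1 - (INR n - 1)) with 1 in Hn by ring. minmax.
Qed.

Section GaloisRepresentation.
Variables A B : PSig.
Variable RDA : Representation A.
Variable RDB : Representation B.
Hypothesis HPA : is_Pavelka A.
Hypothesis HPB : is_Pavelka B.
Let HMA : is_MV A := proj1 HPA.
Let HMB : is_MV B := proj1 HPB.
Variables (d : A -> B) (h : B -> A).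
Hypothesis Hg : galois A B d h.
Local Notation qa x F := (v01 (quot A x F)).
Local Notation qb z G := (v01 (quot B z G)).

Lemma galois_d0 : d mzero = mone.
Proof. apply (mle1 B HMB), (proj1 (proj2 (proj2 Hg))), mle0x; auto. Qed.

Lemma galois_d_mjoin (b1 b2 : A) : mle (mmeet (d b1) (d b2)) (d (mjoin b1 b2)).
Proof.
  apply (proj1 (proj2 (proj2 Hg))). apply mjoin_lub; auto; apply (proj1 (proj2 (proj2 Hg))).
  - apply mmeet_lbl; auto.
  - apply mmeet_lbr; auto.
Qed.

(* The [sup] defining [R(F,G)] is controlled by the elements [b] with [d b ∈ G]: a term
   [d(a)/G · a/F] above [v] would, via a rational [r < d(a)/G], give [d(r·a) = r → d(a) ∈ G]. *)
Lemma Rel_of_le (F : SpecM A) (G : SpecM B) v : 0 <= v ->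
  (forall b, proj1_sig G (d b) -> qa b F <= v) -> v01 (Rel_of A B d F G) <= v.
Proof.
  intros Hv Hb. apply sup01_lub; auto. intros a. rewrite v01_mul.
  pose proof (v01_bounds (quot B (d a) G)); pose proof (v01_bounds (quot A a F)).
  apply Rnot_lt_le; intros Hc.
  destruct (exists_Q01_between (v + 1 - qa a F) (qb (d a) G)) as [r Hr]; try minmax.
  assert (Hra : proj1_sig G (d (mmul (pcst r) a))).
  { rewrite <- (proj2 (proj2 (proj2 Hg))). apply (quot_eq1 B RDB HPB G).
    rewrite quot_arrow, quot_cst; auto. pose proof (qv_bounds r). minmax. }
  apply Hb in Hra. rewrite quot_mul, quot_cst in Hra; auto. minmax.
Qed.

Lemma exists_separating_filter (G : SpecM B) (x : A) (s : Q01) :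
  ~ proj1_sig G (d (mmul (pcst s) x)) ->
  exists F : SpecM A, (forall b, proj1_sig G (d b) -> qa b F <= qa (mmul (pcst s) x) F) /\
                      1 - qv s <= qa x F.
Proof.
  intros Hy. set (y := mmul (pcst s) x) in *. set (w := marrow (pcst (qcompl s)) x).
  set (P := fun b : A => proj1_sig G (d b)).
  set (u := fun b : A => mmul (marrow b y) w).
  set (D := fun z => exists b, P b /\ z = u b).
  assert (HG : is_filter B (proj1_sig G)) by apply (proj2_sig G).
  assert (HP0 : P mzero) by (unfold P; rewrite galois_d0; apply filter_one; auto).
  assert (Hu_anti : forall b b', mle b b' -> mle (u b') (u b)).
  { intros b b' Hbb. apply mmul_monol, oplus_monol, neg_anti; auto. }
  assert (HD : is_proper_filter A (pow_upset A D)).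
  { apply proper_filterI; [apply pow_upset_filter; auto|].
    - exists (u mzero), mzero. auto.
    - intros s1 s2 [b1 [Hb1 ->]] [b2 [Hb2 ->]]. exists (u (mjoin b1 b2)).
      split; [|split; apply Hu_anti; [apply mjoin_ubl|apply mjoin_ubr]; auto].
      exists (mjoin b1 b2). split; auto. unfold P.
      apply filter_up with (mmeet (d b1) (d b2)); auto; [|apply galois_d_mjoin].
      apply filter_up with (mmul (d b1) (d b2)); auto; [apply filter_mul; auto|].
      apply mmeet_glb; auto; [apply mmul_le|rewrite mmulC; [apply mmul_le|]]; auto.
    - intros [z [[b [Hb ->]] [n Hn]]]. apply Hy. apply filter_up with (d b); auto.
      apply (proj1 Hg), (rep_pow_annihilates A RDA x b s n), (mle0 A HMA), Hn. }
  destruct (proper_filter_maximal_ext A HMA _ HD) as [F0 [HF0 Hsub]].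
  set (F := exist _ F0 HF0 : SpecM A). exists F. split.
  - intros b Hb. assert (Hin : F0 (marrow b y)).
    { apply (filter_up A F0 (u b)); [apply HF0| |apply mmul_le; auto].
      apply Hsub, (pow_upset_incl A HMA). exists b; auto. }
    apply (quot_eq1 A RDA HPA F) in Hin. rewrite quot_arrow in Hin; auto.
    pose proof (v01_bounds (quot A b F)). minmax.
  - assert (Hin : F0 w).
    { apply (filter_up A F0 (u mzero)); [apply HF0| |unfold u; rewrite mmulC; auto; apply mmul_le; auto].
      apply Hsub, (pow_upset_incl A HMA). exists mzero; auto. }
    apply (quot_eq1 A RDA HPA F) in Hin. unfold w in Hin. rewrite quot_arrow, quot_cst, qv_qcompl in Hin; auto.
    pose proof (v01_bounds (quot A x F)). minmax.
Qed.

Lemma nat_emb_galois_d (x : A) : nat_emb B (d x) = dR (Rel_of A B d) (nat_emb A x).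
Proof.
  apply functional_extensionality; intros G. apply I01_eq. unfold nat_emb, dR.
  set (m := v01 (inf01 (fun F => @marrow std01 (quot A x F) (Rel_of A B d F G)))).
  pose proof (v01_bounds (quot B (d x) G)). assert (Hm : 0 <= m <= 1) by apply v01_bounds.
  apply Rle_antisym.
  - apply inf01_glb; [lra|]. intros F. rewrite v01_arrow.
    pose proof (sup01_ub (fun a => @mmul std01 (quot B (d a) G) (quot A a F)) x) as Hx.
    cbv beta in Hx. rewrite v01_mul in Hx. fold (Rel_of A B d F G) in Hx.
    pose proof (v01_bounds (quot A x F)). minmax.
  - apply Rnot_lt_le; intros Hlt.
    destruct (exists_Q01_between (qb (d x) G) m) as [s Hs]; try lra.
    pose proof (qv_bounds s).
    destruct (exists_separating_filter G x s) as [F [Hby Hw]].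
    { rewrite (quot_eq1 B RDB HPB), <- (proj2 (proj2 (proj2 Hg))), quot_arrow, quot_cst; auto. minmax. }
    assert (HR : v01 (Rel_of A B d F G) <= qv s + qa x F - 1).
    { rewrite quot_mul, quot_cst in Hby; auto. apply Rel_of_le; [lra|].
      intros b Hb. specialize (Hby b Hb). minmax. }
    pose proof (inf01_lb (fun F => @marrow std01 (quot A x F) (Rel_of A B d F G)) F) as Hinf.
    cbv beta in Hinf. rewrite v01_arrow in Hinf. fold m in Hinf. minmax.
Qed.

End GaloisRepresentation.

Lemma galois_sym (A B : PSig) (d : A -> B) (h : B -> A) :
  is_Pavelka A -> is_Pavelka B -> galois A B d h -> galois B A h d.
Proof.
  intros [HMA _] [HMB _] [Hd [Hh [Hadj Hc]]].
  split; [auto|split; [auto|split]].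
  - intros y x. rewrite Hadj. tauto.
  - intros r y. apply (mle_antisym A HMA).
    + apply Hadj. rewrite mmulC; auto. apply mmul_residual; auto.
      change (mle y (marrow (pcst r) (d (marrow (pcst r) (h y))))). rewrite Hc. apply Hadj.
      rewrite mmulC; auto. apply mmul_residual, mle_refl; auto.
    + apply mmul_residual; auto. rewrite mmulC; auto.
      apply Hadj. rewrite <- Hc. apply mmul_residual; auto. rewrite mmulC; auto.
      apply Hadj, mle_refl; auto.
Qed.

Lemma Rel_of_le_sym (A B : PSig) (RDA : Representation A) (HPA : is_Pavelka A) (HPB : is_Pavelka B)
  (d : A -> B) (h : B -> A) :
  galois A B d h -> forall F G, v01 (Rel_of A B d F G) <= v01 (Rel_of B A h G F).
Proof.
  intros [_ [_ [Hadj _]]] F G. apply sup01_lub; [apply v01_bounds|]. intros a. rewrite v01_mul.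
  pose proof (sup01_ub (fun b : B => @mmul std01 (quot A (h b) F) (quot B b G)) (d a)) as H.
  cbv beta in H. rewrite v01_mul in H. fold (Rel_of B A h G F) in H.
  assert (Ha : mle a (h (d a))) by (apply Hadj, mle_refl, HPB).
  apply (quot_mono A RDA HPA F) in Ha. minmax.
Qed.

Lemma nat_emb_galois_h (A B : PSig) (RDA : Representation A) (RDB : Representation B)
  (HPA : is_Pavelka A) (HPB : is_Pavelka B) d h :
  galois A B d h -> forall y, nat_emb A (h y) = hR (Rel_of A B d) (nat_emb B y).
Proof.
  intros Hg y. pose proof (galois_sym A B d h HPA HPB Hg) as Hg'.
  rewrite (nat_emb_galois_d B A RDB RDA HPB HPA h d Hg' y).
  unfold dR, hR. apply functional_extensionality; intros F. do 2 f_equal.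
  apply functional_extensionality; intros G. f_equal. apply I01_eq, Rle_antisym.
  - exact (Rel_of_le_sym B A RDB HPB HPA h d Hg' G F).
  - exact (Rel_of_le_sym A B RDA HPA HPB d h Hg F G).
Qed.

Section FuzzyRelation.
Variables I J : Type.
Variable Rel : I -> J -> I01.

Lemma hR_dR_flip : hR Rel = dR (fun j i => Rel i j).
Proof. reflexivity. Qed.

Lemma le_dR_iff (x : J -> I01) (y : I -> I01) :
  (forall j, v01 (x j) <= v01 (dR Rel y j)) <->
  forall i j, v01 (y i) + v01 (x j) - 1 <= v01 (Rel i j).
Proof.
  split.
  - intros H i j. pose proof (Rle_trans _ _ _ (H j) (inf01_lb _ i)) as Hij.
    cbv beta in Hij. rewrite v01_arrow in Hij. pose proof (v01_bounds (y i)). minmax.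
  - intros H j. apply inf01_glb; [apply v01_bounds|]. intros i. rewrite v01_arrow.
    specialize (H i j). pose proof (v01_bounds (x j)). minmax.
Qed.

Lemma dR_anti (x y : pow01 I) : mle x y -> mle (dR Rel y : pow01 J) (dR Rel x).
Proof.
  rewrite !pow01_mle. intros Hxy. apply le_dR_iff. intros i j.
  pose proof (proj1 (le_dR_iff (dR Rel y) y) (fun j => Rle_refl _) i j).
  specialize (Hxy i). lra.
Qed.

Lemma dR_cst (r : Q01) (x : pow01 I) :
  marrow (pcst r : pow01 J) (dR Rel x) = dR Rel (mmul (pcst r) x).
Proof.
  apply functional_extensionality; intros j.
  change (@marrow std01 (i01_cst r) (dR Rel x j) =
          inf01 (fun i => @marrow std01 (@mmul std01 (i01_cst r) (x i)) (Rel i j))).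
  unfold dR. rewrite <- inf01_arrow. f_equal. apply functional_extensionality; intros i.
  apply I01_eq. rewrite !v01_arrow, v01_mul.
  pose proof (v01_bounds (x i)); pose proof (v01_bounds (Rel i j)); pose proof (qv_bounds r).
  rewrite v01_cst. minmax.
Qed.
End FuzzyRelation.

Lemma dR_hR_galois (I J : Type) (Rel : I -> J -> I01) :
  galois (pow01 I) (pow01 J) (dR Rel) (hR Rel).
Proof.
  split; [|split; [|split]].
  - apply dR_anti.
  - rewrite hR_dR_flip. apply dR_anti.
  - intros y x. rewrite hR_dR_flip, !pow01_mle, !le_dR_iff.
    split; intros H i j; specialize (H j i); lra.
  - apply dR_cst.
Qed.

Theorem theorem7 :
  (forall (I J : Type) (Rel : I -> J -> I01),
      galois (pow01 I) (pow01 J) (dR Rel) (hR Rel)) /\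
  (forall (A B : PSig), is_Pavelka A -> is_Pavelka B ->
      semisimple A -> semisimple B ->
      forall (d : A -> B) (h : B -> A), galois A B d h ->
        (forall x : A, nat_emb B (d x) = dR (Rel_of A B d) (nat_emb A x)) /\
        (forall y : B, nat_emb A (h y) = hR (Rel_of A B d) (nat_emb B y))).
Proof.
  split; [exact dR_hR_galois|].
  intros A B HPA HPB SA SB d h Hg.
  destruct (semisimple_representation A HPA SA) as [RDA].
  destruct (semisimple_representation B HPB SB) as [RDB].
  split.
  - exact (nat_emb_galois_d A B RDA RDB HPA HPB d h Hg).
  - exact (nat_emb_galois_h A B RDA RDB HPA HPB d h Hg).
Qed.
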